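(* Let $p,r$ be distinct primes with $p\geq 3$, and let $G$ be a finite group with $G=O^{p'}(G)$ that acts faithfully and completely reducibly on an elementary abelian $r$-group $V$. Assume that $|G|_p=p^c\geq p^2$, that $O_p(G)$ is cyclic of order $p$ and acts fixed-point-freely on $V$, and that every nonidentity element of $V$ is fixed by a unique subgroup of $G$ of order $p^{c-1}$. Then $G$ acts primitively on $V$.
   Context: $O^{p'}(G)$ is the smallest normal subgroup of $G$ whose index is not divisible by $p$; $O_p(G)$ is the largest normal $p$-subgroup of $G$; $|G|_p$ is the $p$-part of $|G|$. A group $U$ acts fixed-point-freely on $V$ if $U\ltimes V$ is a Frobenius group with complement $U$ and kernel $V$ (i.e. each nonidentity element of $U$ fixes only the identity of $V$). An irreducible $G$-module $V$ is imprimitive if $V=V_1\oplus\cdots\oplus V_n$ for some $n\geq 2$ subspaces $V_i$ permuted transitively by $G$; $V$ is primitive if it is irreducible and not imprimitive. *)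

From HB Require Import structures.
From mathcomp Require Import all_boot all_order all_algebra all_fingroup all_solvable all_field all_character.
Set Implicit Arguments. Unset Strict Implicit. Unset Printing Implicit Defensive.
Import GRing.Theory.
Local Open Scope ring_scope.

(* O^{p'}(G): the smallest normal subgroup of G whose index is not divisible
   by p, realised as the intersection of all such normal subgroups. *)
Definition Opres_pprime (gT : finGroupType) (p : nat) (G : {set gT}) : {set gT} :=
  (\bigcap_(H : {group gT} | (H <| G)%g && ~~ (p %| #|G : H|)%N) H)%g.

Definition mx_fixed_by (F : fieldType) (gT : finGroupType) (G : {group gT}) (n : nat)
  (rG : mx_representation F G n) (H : {set gT}) (v : 'rV[F]_n) : Prop :=
  forall h, h \in H -> v *m rG h = v.

Definition mx_fpf (F : fieldType) (gT : finGroupType) (G : {group gT}) (n : nat)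
  (rG : mx_representation F G n) (U : {set gT}) : Prop :=
  forall x, x \in U -> x != 1%g -> forall v : 'rV[F]_n, v *m rG x = v -> v = 0.

Definition mx_imprimitive (F : fieldType) (gT : finGroupType) (G : {group gT}) (n : nat)
  (rG : mx_representation F G n) : Prop :=
  exists m : nat, exists W : 'I_m -> 'M[F]_n,
    [/\ (2 <= m)%N,
        (\sum_i W i :=: 1%:M)%MS,
        mxdirect (\sum_i W i),
        (forall g i, g \in G -> exists j, (W i *m rG g :=: W j)%MS) &
        (forall i j, exists2 g, g \in G & (W i *m rG g :=: W j)%MS)].

Definition mx_primitive (F : fieldType) (gT : finGroupType) (G : {group gT}) (n : nat)
  (rG : mx_representation F G n) : Prop :=
  mx_irreducible rG /\ ~ mx_imprimitive rG.

From HB Require Import structures.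
From mathcomp Require Import all_boot all_order all_algebra all_fingroup all_solvable all_field all_character.
Set Implicit Arguments. Unset Strict Implicit. Unset Printing Implicit Defensive.
Import GRing.Theory.
Local Open Scope ring_scope.

(* Let V = A (+) B and let h in G fix a + b, with a in A, b in B, and map
   each of a, b into A or B.  Then h fixes both a and b or swaps them; in the
   latter case h^2 fixes a, hence so does h, which has odd order.  Now take
   a system of blocks permuted by G and nonzero a, b in distinct blocks: the
   unique subgroup of order p^(c-1) fixing a + b fixes a, so it is the one
   fixing a, and it fixes b.  Thus the subgroup fixing a fixes the other
   blocks pointwise and, exchanging two blocks, all of V, against
   faithfulness.  A proper submodule with a complement, and a system of
   imprimitivity, are such block systems.  Beyond faithfulness and complete
   reducibility only p odd, c >= 2 and the uniqueness hypothesis are used. *)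

Lemma addr_eq_sub (V : zmodType) (a b c d : V) : a + b = c + d -> a - c = d - b.
Proof. by move=> e; apply/eqP; rewrite subr_eq addrAC [d + c]addrC -e addrK. Qed.

Lemma submxB (F : fieldType) m1 m2 n (A B : 'M[F]_(m1, n)) (C : 'M_(m2, n)) :
  (A <= C)%MS -> (B <= C)%MS -> (A - B <= C)%MS.
Proof. by move=> sAC sBC; rewrite addmx_sub ?eqmx_opp. Qed.

Section BlockSystems.

Variables (F : fieldType) (gT : finGroupType) (G : {group gT}) (n : nat).
Variable rG : mx_representation F G n.

Definition mx_block_system (I : finType) (W : I -> 'M[F]_n) : Prop :=
  [/\ (\sum_i W i :=: 1%:M)%MS, mxdirect (\sum_i W i) &
      forall i g, g \in G -> exists j, (W i *m rG g <= W j)%MS].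

Lemma imprimitive_block_system :
  (0 < n)%N -> mx_imprimitive rG ->
  exists m (W : 'I_m -> 'M_n) i j,
    [/\ mx_block_system W, i != j, W i != 0 & W j != 0].
Proof.
move=> n_gt0 [m [W [m_ge2 defW dxW permW transW]]].
pose i0 : 'I_m := Ordinal (ltnW m_ge2); pose i1 : 'I_m := Ordinal m_ge2.
have nzW i : W i != 0.
  apply: contraTneq n_gt0 => Wi0.
  have W0 j : W j = 0.
    have [g _ defWj] := transW i j.
    by apply/eqP; rewrite -submx0 -defWj Wi0 mul0mx.
  by rewrite -(mxrank1 F n) -defW big1 ?mxrank0.
exists m, W, i0, i1; split; rewrite ?nzW //.
split=> // i g Gg; have [j defWj] := permW g i Gg.
by exists j; rewrite defWj.
Qed.

Lemma complement_block_system (U W : 'M_n) :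
  mxmodule rG U -> mxmodule rG W -> (U + W :=: 1%:M)%MS -> mxdirect (U + W) ->
  mx_block_system (fun b : bool => if b then U else W).
Proof.
move=> modU modW defUW /mxdirect_addsP capUW; split.
- by rewrite big_bool.
- apply/mxdirect_sumsP=> b _; rewrite (big_pred1 (~~ b)) => [|b'].
    by case: b; rewrite // capmxC.
  by case: b; case: b'.
- by move=> b g Gg; exists b; case: b; apply: (mxmoduleP _ g Gg).
Qed.

Lemma block_image_sub (I : finType) (W : I -> 'M_n) i j (x : 'rV_n) g :
  mx_block_system W -> (x <= W j)%MS -> g \in G ->
  (x *m rG g <= W i)%MS || (x *m rG g <= \sum_(l | l != i) W l)%MS.
Proof.
case=> _ _ permW xWj Gg; have [l sWjl] := permW j g Gg.
have xgWl := submx_trans (submxMr (rG g) xWj) sWjl.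
have [<-|li] := eqVneq l i; first by rewrite xgWl.
by rewrite (sumsmx_sup l) ?orbT.
Qed.

Lemma fixed_by_all_sub_rker (K : {set gT}) :
  K \subset G -> (forall v, mx_fixed_by rG K v) -> K \subset rker rG.
Proof.
move=> sKG fixK; apply/subsetP=> h Kh; apply/rkerP.
split; first exact: (subsetP sKG).
by apply/row_matrixP=> i; rewrite !rowE mulmx1 fixK.
Qed.

Lemma mx_faithful_dim0 : mx_faithful rG -> n = 0 -> G \subset [1 gT]%g.
Proof.
move=> ffulG n0; apply: subset_trans ffulG; apply/subsetP=> x Gx; apply/rkerP.
by split=> //; apply/matrixP=> i; have := ltn_ord i; rewrite {2}n0.
Qed.

Lemma odd_order_fixed_sqr (v : 'rV_n) h :
  h \in G -> odd #[h]%g -> v *m rG h *m rG h = v -> v *m rG h = v.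
Proof.
move=> Gh odd_h fix_h2.
have: (h ^+ 2)%g \in rstab rG v.
  by rewrite !inE groupX //= expgS expg1 repr_mxM // mulmxA fix_h2.
move/(groupX (expg_invn <[h]> 2)); rewrite expgK ?cycle_id //.
  by rewrite inE => /andP[_ /eqP].
by rewrite -orderE coprimen2.
Qed.

Lemma fixed_sum_fixed_summand (A B : 'M_n) (a b : 'rV_n) h :
  (A :&: B = 0)%MS -> (a <= A)%MS -> (b <= B)%MS -> h \in G -> odd #[h]%g ->
  (a *m rG h <= A)%MS || (a *m rG h <= B)%MS ->
  (b *m rG h <= A)%MS || (b *m rG h <= B)%MS ->
  (a + b) *m rG h = a + b -> a *m rG h = a.
Proof.
move=> capAB aA bB Gh odd_h; set a' := a *m rG h; set b' := b *m rG h.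
have meet0 (x : 'rV_n) : (x <= A)%MS -> (x <= B)%MS -> x = 0.
  by move=> xA xB; apply/eqP; rewrite -submx0 -capAB sub_capmx xA xB.
rewrite mulmxDl => /orP[a'A | a'B] /orP[b'A | b'B] fix_ab.
- have b0 : b = 0.
    apply: meet0 => //; have -> : b = a' + b' - a by rewrite fix_ab addrC addKr.
    by rewrite submxB ?addmx_sub.
  by move: fix_ab; rewrite /b' b0 mul0mx !addr0.
- apply/subr0_eq/(meet0 _ (submxB a'A aA)).
  by rewrite (addr_eq_sub fix_ab) submxB.
- rewrite addrC in fix_ab.
  have d0 : b' - a = 0.
    by apply: (meet0 _ (submxB b'A aA)); rewrite (addr_eq_sub fix_ab) submxB.
  have Eb' : b' = a by apply/subr0_eq.
  have Ea' : a' = b by apply/esym/subr0_eq; rewrite -(addr_eq_sub fix_ab).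
  by apply: odd_order_fixed_sqr => //; rewrite -/a' Ea' -/b' Eb'.
- have a0 : a = 0.
    apply: meet0 => //; have -> : a = a' + b' - b by rewrite fix_ab addrK.
    by rewrite submxB ?addmx_sub.
  by rewrite /a' a0 mul0mx.
Qed.

Definition unique_fixing_subgroups (k : nat) : Prop :=
  forall v : 'rV_n, v != 0 ->
    exists H : {group gT},
      [/\ H \subset G, #|H| = k, mx_fixed_by rG H v &
          forall K : {group gT}, K \subset G -> #|K| = k ->
            mx_fixed_by rG K v -> K = H].

Section UniqueFixingSubgroups.

Variable k : nat.
Hypothesis uniq_fixers : unique_fixing_subgroups k.

Lemma fixing_subgroups_eq (v : 'rV_n) (H K : {group gT}) :
  v != 0 -> H \subset G -> #|H| = k -> mx_fixed_by rG H v ->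
  K \subset G -> #|K| = k -> mx_fixed_by rG K v -> H = K.
Proof.
move=> nz_v sHG oH fixHv sKG oK fixKv.
have [L [_ _ _ uniqL]] := uniq_fixers nz_v.
by rewrite (uniqL H) // (uniqL K).
Qed.

Hypothesis odd_k : odd k.

Lemma block_fixer_fixes_other_blocks (I : finType) (W : I -> 'M_n) i j
    (a v : 'rV_n) (K : {group gT}) :
  mx_block_system W -> (a <= W i)%MS -> a != 0 ->
  K \subset G -> #|K| = k -> mx_fixed_by rG K a ->
  j != i -> (v <= W j)%MS -> mx_fixed_by rG K v.
Proof.
move=> sysW aWi nz_a sKG oK fixKa ji vWj.
have [-> | nz_v] := eqVneq v 0; first by move=> h _; rewrite mul0mx.
have [_ dxW _] := sysW.
have capWi : (W i :&: \sum_(l | l != i) W l = 0)%MS := mxdirect_sumsP dxW i isT.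
have vB : (v <= \sum_(l | l != i) W l)%MS by rewrite (sumsmx_sup j).
have nz_av : a + v != 0.
  apply: contraNneq nz_a => /addr0_eq av0.
  by rewrite -submx0 -capWi sub_capmx aWi -[a]opprK av0 eqmx_opp.
have [H [sHG oH fixHav _]] := uniq_fixers nz_av.
have fixHa : mx_fixed_by rG H a.
  move=> h Hh; have Gh := subsetP sHG h Hh.
  apply: (fixed_sum_fixed_summand capWi aWi vB Gh); last exact: fixHav.
  - by rewrite (dvdn_odd (order_dvdG Hh)) ?oH.
  - exact: block_image_sub sysW aWi Gh.
  - exact: block_image_sub sysW vWj Gh.
rewrite (fixing_subgroups_eq nz_a sKG oK fixKa sHG oH fixHa) => h Hh.
by apply: (addrI (a *m rG h)); rewrite -mulmxDl fixHav // fixHa.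
Qed.

Hypotheses (k_gt1 : (1 < k)%N) (ffulG : mx_faithful rG).

Lemma no_block_system (I : finType) (W : I -> 'M_n) i j :
  i != j -> W i != 0 -> W j != 0 -> ~ mx_block_system W.
Proof.
move=> ij nzWi nzWj sysW; have [defW _ _] := sysW.
have [a_Wi b_Wj] := (nz_row_sub (W i), nz_row_sub (W j)).
have [nz_a nz_b] : nz_row (W i) != 0 /\ nz_row (W j) != 0 by rewrite !nz_row_eq0.
have [K [sKG oK fixKa _]] := uniq_fixers nz_a.
have ji : j != i by rewrite eq_sym.
have fixKb := block_fixer_fixes_other_blocks sysW a_Wi nz_a sKG oK fixKa ji b_Wj.
have fixK_blocks l v : (v <= W l)%MS -> mx_fixed_by rG K v.
  have [-> | li] := eqVneq l i.
    exact: block_fixer_fixes_other_blocks sysW b_Wj nz_b sKG oK fixKb ij.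
  exact: block_fixer_fixes_other_blocks sysW a_Wi nz_a sKG oK fixKa li.
have fixK v : mx_fixed_by rG K v.
  have /sub_sumsmxP[u ->] : (v <= \sum_l W l)%MS by rewrite defW submx1.
  move=> h Kh; rewrite mulmx_suml; apply: eq_bigr => l _.
  by apply: fixK_blocks Kh; apply: submxMl.
have := subset_trans (fixed_by_all_sub_rker sKG fixK) ffulG.
by rewrite subG1 trivg_card1 oK; apply/negP; rewrite neq_ltn k_gt1 orbT.
Qed.

End UniqueFixingSubgroups.

End BlockSystems.

Theorem lemma2p3 (p r : nat) (gT : finGroupType) (G : {group gT}) (n c : nat)
  (rG : mx_representation 'F_r G n) :
  prime p -> prime r -> p != r -> (3 <= p)%N ->
  Opres_pprime p G = G ->
  mx_faithful rG ->
  mx_completely_reducible rG 1%:M ->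
  (#|G|`_p)%N = (p ^ c)%N -> (2 <= c)%N ->
  cyclic 'O_p(G)%g -> #|'O_p(G)%g| = p ->
  mx_fpf rG 'O_p(G)%g ->
  (forall v : 'rV['F_r]_n, v != 0 ->
     exists H : {group gT},
       [/\ H \subset G, #|H| = (p ^ c.-1)%N, mx_fixed_by rG H v &
           forall K : {group gT}, K \subset G -> #|K| = (p ^ c.-1)%N ->
             mx_fixed_by rG K v -> K = H]) ->
  mx_primitive rG.
Proof.
move=> p_pr _ _ p_ge3 _ ffulG CR oGp c_ge2 _ _ _ uniq_fixers.
have odd_p : odd p by case: (even_prime p_pr) p_ge3 => [->|].
have odd_k : odd (p ^ c.-1) by rewrite oddX odd_p orbT.
have k_gt1 : (1 < p ^ c.-1)%N.
  by rewrite -{1}(expn0 p) ltn_exp2l ?prime_gt1 // ltn_predRL.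
have n_gt0 : (0 < n)%N.
  rewrite lt0n; apply/eqP => /(mx_faithful_dim0 ffulG)/trivgP G1.
  move: oGp; rewrite G1 cards1 partn1 => /esym/eqP.
  by rewrite -[1%N](expn0 p) eqn_exp2l ?prime_gt1 // => /eqP c0; rewrite c0 in c_ge2.
split.
  apply/mx_irrP; split=> // U modU nzU; apply: contraT => not_fullU.
  have [U' modU' defUU' dxUU'] := CR U modU (submx1 U).
  have nzU' : U' != 0.
    by apply: contraNneq not_fullU => U'0; rewrite -sub1mx -defUU' U'0 addsmx0.
  have sysUU' := complement_block_system modU modU' defUU' dxUU'.
  have two_blocks : true != false by [].
  by case: (no_block_system uniq_fixers odd_k k_gt1 ffulG two_blocks nzU nzU' sysUU').
case/(imprimitive_block_system n_gt0) => m [W [i [j [sysW ij nzWi nzWj]]]].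
by case: (no_block_system uniq_fixers odd_k k_gt1 ffulG ij nzWi nzWj sysW).
Qed.
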